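(* Let $\theta\in\mathcal{N}$ be bounded. For $n\ge1$ put $e^\theta_n=[\lambda(n-1;\theta),\lambda(n;\theta)]$ (with $\lambda(0;\theta)=*$). Then $P^\theta(\{(e^\theta_n)_{n=1}^\infty\})>0$ and \[P^\theta\Big(\bigcup_{\gamma\in\mathfrak{S}}\{\gamma((e^\theta_n)_{n=1}^\infty)\}\Big)=1.\]
   Context: Fix $q\in(0,1)$. Gelfand--Tsetlin graph: for $N\ge1$ let $\mathrm{Sign}_N=\{\lambda\in\mathbb{Z}^N\mid \lambda_1\ge\cdots\ge\lambda_N\}$, $\mathrm{Sign}_0=\{*\}$, $|\lambda|=\lambda_1+\cdots+\lambda_N$. For $\mu\in\mathrm{Sign}_{N-1}$, $\lambda\in\mathrm{Sign}_N$ write $\mu\prec\lambda$ if $\lambda_1\ge\mu_1\ge\lambda_2\ge\cdots\ge\mu_{N-1}\ge\lambda_N$ (with $*\prec\lambda$ for all $\lambda\in\mathrm{Sign}_1$). Edges of level $N$ are pairs $[\mu,\lambda]$ with $\mu\prec\lambda$, source $\mu$, range $\lambda$; a path is a sequence of edges with the range of each equal to the source of the next. Weight $w([\mu,\lambda])=q^{N|\mu|-(N-1)|\lambda|}$ for a level-$N$ edge, multiplicative along paths. For $\mu\in\mathrm{Sign}_K,\lambda\in\mathrm{Sign}_N$, $K<N$: $\dim_q(\mu,\lambda)=\sum_\alpha w(\alpha)$ over finite paths $\alpha$ from $\mu$ to $\lambda$; $\dim_q(\lambda)=\dim_q( *,\lambda)$. $\Omega$: infinite paths from $*$; $C_\alpha$: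 infinite paths beginning with the finite path $\alpha$; $\mathcal{C}$: $\sigma$-algebra generated by the $C_\alpha$. $P$ is $q$-central if $P(C_\alpha)/w(\alpha)=P(\{\omega\mid r(\omega_N)=\lambda\})/\dim_q(\lambda)$ for all $\lambda\in\mathrm{Sign}_N$ and paths $\alpha$ from $*$ to $\lambda$. For $\lambda\in\mathrm{Sign}_N$, each permutation $\gamma_0$ of the finite paths from $*$ to $\lambda$ acts on $\Omega$ by replacing the initial segment $(\omega_1,\dots,\omega_N)$ by its image under $\gamma_0$ when $\omega_N$ ends at $\lambda$ and fixing other $\omega$; $\mathfrak{S}_N$ is generated by these for all $\lambda\in\mathrm{Sign}_N$, $\mathfrak{S}=\bigcup_N\mathfrak{S}_N$. Let $\mathcal{N}=\{\theta\in\mathbb{Z}^\infty\mid\theta_1\le\theta_2\le\cdots\}$ and $\lambda(n;\theta)=(\theta_n,\dots,\theta_1)\in\mathrm{Sign}_n$. (Known fact:) for each $\theta\in\mathcal{N}$ there is a unique $q$-central probability measure $P^\theta$ with $P^\theta(C_\alpha)/\dim_q(\lambda)=\lim_{n\to\infty}\dim_q(\lambda,\lambda(n;\theta))/\dim_q(\lambda(n;\theta))$ for every finite path $\alpha$ from $*$ to $\lambda\in\mathrm{Sign}_N$; the $P^\theta$ are exactly the extreme, equivalently $\mathfrak{S}$-ergodic, $q$-central probability measures. *)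

From HB Require Import structures.
From mathcomp Require Import all_boot all_order all_algebra.
From mathcomp Require Import all_classical all_reals all_analysis.
Set Implicit Arguments. Unset Strict Implicit. Unset Printing Implicit Defensive.
Import Order.TTheory GRing.Theory Num.Theory numFieldNormedType.Exports.
Local Open Scope classical_set_scope.
Local Open Scope ring_scope.

(* Signatures of length N are lists [l_1; ...; l_N] of integers with
   l_1 >= ... >= l_N; Sign_0 = {*} is represented by the empty list. *)
Definition is_sign (N : nat) (l : seq int) : Prop :=
  size l = N /\ forall i, (i.+1 < N)%N -> nth 0 l i.+1 <= nth 0 l i.

Definition sgn_sum (l : seq int) : int := \sum_(x <- l) x.

Definition prec (mu lam : seq int) : Prop :=
  exists N, [/\ is_sign N mu, is_sign N.+1 lam &
    forall i, (i < N)%N -> nth 0 lam i.+1 <= nth 0 mu i /\ nth 0 mu i <= nth 0 lam i].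

(* A finite path is represented by its list of vertices [nu_K; ...; nu_N]
   (the edges being [nu_{i-1}, nu_i]). *)
Fixpoint is_fpath (mu : seq int) (s : seq (seq int)) : Prop :=
  match s with
  | [::] => True
  | nu :: s' => prec mu nu /\ is_fpath nu s'
  end.

Definition fpath_from_to (mu lam : seq int) (a : seq (seq int)) : Prop :=
  exists s, [/\ a = mu :: s, is_fpath mu s & last mu s = lam].

Definition fpaths_to (lam : seq int) : set (seq (seq int)) :=
  [set a | fpath_from_to [::] lam a].

Section Weights.
Variables (R : realType) (q : R).

Definition edge_w (mu lam : seq int) : R :=
  q ^ ((size lam)%:Z * sgn_sum mu - ((size lam)%:Z - 1) * sgn_sum lam).

Fixpoint pw (mu : seq int) (s : seq (seq int)) : R :=
  match s with
  | [::] => 1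
  | nu :: s' => edge_w mu nu * pw nu s'
  end.

Definition weight (a : seq (seq int)) : R :=
  match a with [::] => 1 | mu :: s => pw mu s end.

Definition dimq (mu lam : seq int) : R :=
  \sum_(a \in [set a | fpath_from_to mu lam a]) weight a.

End Weights.

(* An infinite path from * is given by its vertex sequence w 0 = *, w 1, ...;
   its n-th edge is omega_n = [w (n-1), w n], with range r(omega_n) = w n. *)
Definition is_inf_path (w : nat -> seq int) : Prop :=
  w 0%N = [::] /\ forall n, prec (w n) (w n.+1).

Definition Omega := {w : nat -> seq int | is_inf_path w}.

Lemma omega0_proof : is_inf_path (fun n => nseq n (0 : int)).
Proof.
split => // n; exists n; split.
- by split; [rewrite size_nseq | move=> i _; rewrite !nth_nseq !if_same].
- by split; [rewrite size_nseq | move=> i _; rewrite !nth_nseq !if_same].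
- by move=> i lt; rewrite !nth_nseq !if_same.
Qed.

HB.instance Definition _ := gen_eqMixin Omega.
HB.instance Definition _ := gen_choiceMixin Omega.
HB.instance Definition _ := isPointed.Build Omega (exist _ _ omega0_proof).

Definition cyl (a : seq (seq int)) : set Omega :=
  [set w | forall i, (i < size a)%N -> sval w i = nth [::] a i].

Definition cylinders : set (set Omega) :=
  [set C | exists lam a, fpaths_to lam a /\ C = cyl a].

Definition OmegaM := g_sigma_algebraType cylinders.

Definition level_set (N : nat) (lam : seq int) : set OmegaM :=
  [set w | sval w N = lam].

Section Measures.
Variables (R : realType) (q : R).

Definition q_central (P : probability OmegaM R) : Prop :=
  forall N lam a, is_sign N lam -> fpaths_to lam a ->
    fine (P (cyl a)) / weight q a = fine (P (level_set N lam)) / dimq q [::] lam.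

(* lambda(n; theta) = (theta_n, ..., theta_1), with theta_{i+1} = theta i *)
Definition lam_th (theta : nat -> int) (n : nat) : seq int :=
  rev (mkseq theta n).

Definition is_P_theta (theta : nat -> int) (P : probability OmegaM R) : Prop :=
  q_central P /\
  forall N lam a, is_sign N lam -> fpaths_to lam a ->
    (fun n => dimq q lam (lam_th theta n) / dimq q [::] (lam_th theta n))
      @ \oo --> fine (P (cyl a)) / weight q a.

End Measures.

Record gen := Gen { g_lam : seq int; g_perm : seq (seq int) -> seq (seq int) }.

Definition is_gen (N : nat) (g : gen) : Prop :=
  is_sign N (g_lam g) /\
  set_bij (fpaths_to (g_lam g)) (fpaths_to (g_lam g)) (g_perm g).

Definition gact (g : gen) (w : nat -> seq int) : nat -> seq int :=
  let N := size (g_lam g) in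
  if w N == g_lam g then
    (fun i => if (i <= N)%N then nth [::] (g_perm g (mkseq w N.+1)) i else w i)
  else w.

Fixpoint all_gen (N : nat) (s : seq gen) : Prop :=
  match s with [::] => True | g :: s' => is_gen N g /\ all_gen N s' end.

(* orbit of x under S = \bigcup_N S_N, S_N being the group generated by the
   level-N generators (closed under inverses, so finite words suffice) *)
Definition S_orbit (x : nat -> seq int) : set OmegaM :=
  [set w | exists N (s : seq gen), all_gen N s /\ sval w = foldr gact x s].

From HB Require Import structures.
From mathcomp Require Import all_boot all_order all_algebra.
From mathcomp Require Import all_classical all_reals all_analysis.
From mathcomp Require Import zify ring.
Import Order.TTheory GRing.Theory Num.Theory numFieldNormedType.Exports.
Local Open Scope classical_set_scope.
Local Open Scope ring_scope.
Set Implicit Arguments. Unset Strict Implicit. Unset Printing Implicit Defensive.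

(* Since theta is nondecreasing and bounded, it equals a constant c from some
   index m on.  Write x_n = lambda(n; theta), A_n for the weight of the path
   x_0 < x_1 < ... < x_n and D_n = dim_q(x_n).
   For N >= m the path along x is the only path from x_N to x_n, so
   dim_q(x_N, x_n) = A_n / A_N.  And A_n <= D_n <= C A_n for a constant C: a
   step down that deviates from the tail of a signature by y_i >= 0 in part i
   costs q^(2 (i + 1) y_i), and at level k only the parts beyond k - m can
   deviate, which yields a convergent product of geometric factors.
   Hence, by the definition of P^theta, P(C_(x_0, ..., x_N)) is the limit L of
   A_n / D_n for every N >= m, and L >= 1 / C; the singleton {x}, the
   decreasing intersection of these cylinders, has probability L > 0.  By
   q-centrality every cylinder ending at x_N (N >= m) has the same mass as its
   extension along x, so almost every path through x_N follows x forever and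
   lies in the S-orbit of x; and P(omega_N ends at x_N) = L D_N / A_N -> 1. *)

(** * Enumerating the Gelfand--Tsetlin graph *)

Definition zrange (b a : int) : seq int :=
  [seq b + i%:Z | i <- iota 0 (absz (a - b)).+1].

Lemma mem_zrange b a y : b <= a -> (y \in zrange b a) = (b <= y <= a).
Proof.
move=> ba; apply/mapP/idP.
- move=> [i]; rewrite mem_iota add0n => /andP[_ hi] ->.
  apply/andP; split; first by rewrite lerDl.
  have : (i <= absz (a - b))%N by [].
  move: ba; lia.
- move=> /andP[h1 h2]; exists (absz (y - b)); last by lia.
  rewrite mem_iota add0n /=; lia.
Qed.

Lemma uniq_zrange b a : uniq (zrange b a).
Proof. by rewrite map_inj_uniq ?iota_uniq // => i j /addrI []. Qed.

Definition signb (l : seq int) : bool := sorted (fun x y : int => y <= x) l.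

Lemma signbP l :
  reflect (forall i, (i.+1 < size l)%N -> nth 0 l i.+1 <= nth 0 l i) (signb l).
Proof. exact: sortedP. Qed.

Lemma signb_behead a t : signb (a :: t) -> signb t.
Proof. exact: path_sorted. Qed.

Lemma is_signE N l : is_sign N l <-> size l = N /\ signb l.
Proof. by split=> -[<- /signbP]. Qed.

Lemma last_le_head (b : int) t : signb (b :: t) -> last b t <= b.
Proof.
elim: t b => [|c t IH] b //= /andP[cb st].
exact: le_trans (IH c st) cb.
Qed.

(* All [mu] interlacing [l]; the signature condition on [l] is not checked. *)
Fixpoint interlacings (l : seq int) : seq (seq int) :=
  match l with
  | [::] => [::]
  | a :: t => match t with
              | [::] => [:: [::]]
              | b :: _ => [seq y :: r | y <- zrange b a, r <- interlacings t]
              end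
  end.

Definition predecessors (l : seq int) : seq (seq int) :=
  if signb l then interlacings l else [::].

Definition interlace (mu lam : seq int) : Prop :=
  size lam = (size mu).+1 /\
  forall i, (i < size mu)%N ->
    nth 0 lam i.+1 <= nth 0 mu i /\ nth 0 mu i <= nth 0 lam i.

Lemma mem_interlacings lam mu : signb lam -> (0 < size lam)%N ->
  (mu \in interlacings lam) <-> interlace mu lam.
Proof.
elim: lam mu => // a [|b t] IH mu sl _.
  rewrite /= inE /interlace /=; split=> [/eqP ->|]; first by split.
  by case: mu => [|y r] [].
have sbt := signb_behead sl.
have ba : b <= a by case/andP: sl.
change (interlacings (a :: b :: t))
  with [seq y :: r | y <- zrange b a, r <- interlacings (b :: t)].
split.
- move=> /allpairsP [[y r] /= [yin rin ->]].
  have [hs hr] := (IH r sbt isT).1 rin.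
  move: yin; rewrite mem_zrange // => /andP[y1 y2].
  split; first by move: hs => /= ->.
  by case=> [|i] /= hi; [split | apply: hr].
- case: mu => [[]//|y r] [hs hr].
  apply/allpairsP; exists (y, r); split => //=.
  + by rewrite mem_zrange //; have [-> ->] := hr 0%N isT.
  + apply/(IH r sbt isT); split; first by move: hs => /= [->].
    by move=> i; apply: (hr i.+1).
Qed.

Lemma mem_predecessors lam mu :
  (mu \in predecessors lam) <-> (signb lam /\ interlace mu lam).
Proof.
rewrite /predecessors; case: ifP => sl; last by split => // -[h]; rewrite h in sl.
case: lam sl => [|a t] sl; first by split => // -[_ []].
by rewrite mem_interlacings //; split => // -[].
Qed.

Lemma precP mu lam : prec mu lam <-> mu \in predecessors lam.
Proof.
rewrite mem_predecessors; split.
- move=> [N [/is_signE [sm _] /is_signE [sl bl] h]].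
  by split => //; split; [rewrite sl sm | rewrite sm].
- move=> [bl [hs h]]; exists (size mu); split => //; last exact/is_signE.
  apply/is_signE; split => //; apply/signbP => i hi.
  have [h1 _] := h i (ltnW hi); have [_ h2] := h i.+1 hi.
  exact: le_trans h2 h1.
Qed.

Lemma prec_size mu lam : prec mu lam -> size lam = (size mu).+1.
Proof. by move=> /precP /mem_predecessors [_ []]. Qed.

Lemma behead_predecessors a t : signb (a :: t) -> t \in predecessors (a :: t).
Proof.
move=> sl; apply/mem_predecessors; split => //; split => // i hi.
by split => //; apply: (signbP _ sl).
Qed.

Lemma uniq_interlacings lam : uniq (interlacings lam).
Proof.
elim: lam => // a [|b t] IH //.
apply: allpairs_uniq => //; first exact: uniq_zrange.
by move=> [y r] [y' r'] _ _ /= [-> ->].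
Qed.

Lemma uniq_predecessors lam : uniq (predecessors lam).
Proof. by rewrite /predecessors; case: ifP => // _; exact: uniq_interlacings. Qed.

Lemma is_fpath_cat mu s1 s2 :
  is_fpath mu (s1 ++ s2) <-> is_fpath mu s1 /\ is_fpath (last mu s1) s2.
Proof.
elim: s1 mu => [|y s IH] mu /=; first by split => // -[].
by rewrite IH; split => [[? [? ?]]|[[? ?] ?]].
Qed.

Lemma is_fpath_rcons mu s z :
  is_fpath mu (rcons s z) <-> is_fpath mu s /\ prec (last mu s) z.
Proof. by rewrite -cats1 is_fpath_cat /=; split => [[? []]|[? ?]]. Qed.

Lemma size_last_fpath mu s : is_fpath mu s -> size (last mu s) = (size mu + size s)%N.
Proof.
elim: s mu => [|y s IH] mu /=; first by rewrite addn0.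
by move=> [/prec_size h /IH ->]; rewrite h addSnnS.
Qed.

Fixpoint fpath_enum_aux (d : nat) (mu lam : seq int) : seq (seq (seq int)) :=
  match d with
  | 0 => if lam == mu then [:: [:: mu]] else [::]
  | d.+1 => [seq rcons a lam | nu <- predecessors lam, a <- fpath_enum_aux d mu nu]
  end.

Definition fpath_enum (mu lam : seq int) : seq (seq (seq int)) :=
  if (size mu <= size lam)%N then fpath_enum_aux (size lam - size mu) mu lam else [::].

Lemma fpath_enum_aux_sound d mu lam a : a \in fpath_enum_aux d mu lam ->
  fpath_from_to mu lam a /\ size lam = (size mu + d)%N.
Proof.
elim: d lam a => [|d IH] lam a /=.
  case: eqP => // ->; rewrite inE => /eqP ->.
  by split; [exists [::] | rewrite addn0].
move=> /allpairsPdep [nu [a' [nuin a'in ->]]].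
have [[s [-> fp ls]] sz] := IH _ _ a'in.
have pr : prec nu lam by apply/precP.
split; last by rewrite (prec_size pr) sz addnS.
exists (rcons s lam); split; rewrite ?last_rcons //.
by apply/is_fpath_rcons; rewrite ls.
Qed.

Lemma fpath_enum_aux_complete mu s : is_fpath mu s ->
  (mu :: s) \in fpath_enum_aux (size (last mu s) - size mu) mu (last mu s).
Proof.
elim/last_ind: s => [|s z IH] /=; first by rewrite subnn /= eqxx inE.
rewrite is_fpath_rcons last_rcons => -[fp pr].
rewrite (prec_size pr) (size_last_fpath fp) subSn ?leq_addr // addKn.
apply/allpairsPdep; exists (last mu s), (mu :: s); split => //; first exact/precP.
by move: (IH fp); rewrite (size_last_fpath fp) addKn.
Qed.

Lemma mem_fpath_enum mu lam a : (a \in fpath_enum mu lam) <-> fpath_from_to mu lam a.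
Proof.
split; first by rewrite /fpath_enum; case: ifP => // _ /fpath_enum_aux_sound [].
move=> [s [-> fp ls]]; rewrite /fpath_enum -ls size_last_fpath // leq_addr.
by rewrite -(size_last_fpath fp); exact: fpath_enum_aux_complete.
Qed.

Lemma uniq_fpath_enum_aux d mu lam : uniq (fpath_enum_aux d mu lam).
Proof.
elim: d lam => [|d IH] lam /=; first by case: ifP.
apply: allpairs_uniq_dep => //; first exact: uniq_predecessors.
move=> [nu1 a1] [nu2 a2] /allpairsPdep [n1 [b1 [_ b1in e1]]]
  /allpairsPdep [n2 [b2 [_ b2in e2]]] /= e.
move: e1 e2 b1in b2in => [<- <-] [<- <-] b1in b2in.
have ea : a1 = a2 := congr1 fst (rcons_inj e); subst a2.
have [[s1 [e1 _ <-]] _] := fpath_enum_aux_sound b1in.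
have [[s2 [e2 _ <-]] _] := fpath_enum_aux_sound b2in.
by move: e2; rewrite e1 => -[<-].
Qed.

Lemma uniq_fpath_enum mu lam : uniq (fpath_enum mu lam).
Proof. by rewrite /fpath_enum; case: ifP => // _; exact: uniq_fpath_enum_aux. Qed.

Lemma fpaths_to_mkseq (w : nat -> seq int) N : is_inf_path w ->
  fpaths_to (w N) (mkseq w N.+1).
Proof.
move=> [w0 hw]; exists (mkseq (fun i => w i.+1) N); split.
- by rewrite /mkseq /= (iotaDl 1 0) -map_comp w0.
- elim: N => [|N IH] //; rewrite mkseqS; apply/is_fpath_rcons; split => //.
  by case: N {IH} => [|N]; rewrite ?mkseqS ?last_rcons /= -?w0; exact: hw.
- by case: N => [|N] //; rewrite mkseqS last_rcons.
Qed.

Lemma size_fpaths_to lam a : fpaths_to lam a -> size a = (size lam).+1.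
Proof. by move=> [s [-> fp <-]]; rewrite size_last_fpath. Qed.

Lemma nth_fpaths_to lam a : fpaths_to lam a -> nth [::] a (size lam) = lam.
Proof.
move=> h; rewrite -[size lam]/((size lam).+1.-1) -(size_fpaths_to h) nth_last.
by case: h => s [-> _ <-].
Qed.

Lemma sgn_sum_nil : sgn_sum [::] = 0.
Proof. by rewrite /sgn_sum big_nil. Qed.

Lemma sgn_sum_cons a t : sgn_sum (a :: t) = a + sgn_sum t.
Proof. by rewrite /sgn_sum big_cons. Qed.

Section Dimension.
Variables (R : realType) (q : R).

Lemma pw_cat mu s1 s2 : pw q mu (s1 ++ s2) = pw q mu s1 * pw q (last mu s1) s2.
Proof.
elim: s1 mu => [|y s IH] mu /=; first by rewrite mul1r.
by rewrite IH mulrA.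
Qed.

Lemma pw_rcons mu s z : pw q mu (rcons s z) = pw q mu s * edge_w q (last mu s) z.
Proof. by rewrite -cats1 pw_cat /= mulr1. Qed.

Lemma edge_w_gt0 mu lam : 0 < q -> 0 < edge_w q mu lam.
Proof. by move=> q0; rewrite /edge_w exprz_gt0. Qed.

Lemma weight_gt0 a : 0 < q -> 0 < weight q a.
Proof.
move=> q0; case: a => [|mu s] //=.
by elim: s mu => [|y s IH] mu //=; rewrite mulr_gt0 ?edge_w_gt0.
Qed.

Lemma dimqE mu lam : dimq q mu lam = \sum_(a <- fpath_enum mu lam) weight q a.
Proof.
rewrite /dimq; have -> : [set a | fpath_from_to mu lam a] = [set` fpath_enum mu lam].
  by apply/seteqP; split => a /mem_fpath_enum.
by rewrite -fsbig_seq ?uniq_fpath_enum.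
Qed.

Lemma dimq_refl mu : dimq q mu mu = 1.
Proof. by rewrite dimqE /fpath_enum leqnn subnn /= eqxx big_seq1. Qed.

Lemma dimq_size_lt mu lam : (size lam < size mu)%N -> dimq q mu lam = 0.
Proof. by move=> h; rewrite dimqE /fpath_enum leqNgt h big_nil. Qed.

Lemma dimq_size_eq mu lam : size lam = size mu -> lam != mu -> dimq q mu lam = 0.
Proof.
by move=> h /negbTE ne; rewrite dimqE /fpath_enum h leqnn subnn /= ne big_nil.
Qed.

Lemma dimq_predecessors mu lam : (size mu < size lam)%N ->
  dimq q mu lam = \sum_(nu <- predecessors lam) edge_w q nu lam * dimq q mu nu.
Proof.
move=> h; have d0 : (0 < size lam - size mu)%N by rewrite subn_gt0.
rewrite dimqE /fpath_enum (ltnW h) -(prednK d0).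
rewrite /= big_allpairs_dep; apply: eq_big_seq => nu /mem_predecessors [_ [sz _]].
have hm : (size mu <= size nu)%N by rewrite -ltnS -sz.
rewrite dimqE /fpath_enum hm sz subSn // mulr_sumr; apply: eq_big_seq => a ain.
have [[s [-> _ ls]] _] := fpath_enum_aux_sound ain.
by rewrite rcons_cons /= pw_rcons ls mulrC.
Qed.

Lemma dimq_ge0 mu lam : 0 < q -> 0 <= dimq q mu lam.
Proof. by move=> q0; rewrite dimqE sumr_ge0 // => a _; rewrite ltW ?weight_gt0. Qed.

(* A path from [mu] to [nu] interlaces at every level, so [nu] dominates [mu]
   from the top and is dominated by it from the bottom. *)
Lemma dimq_neq0_bounds mu nu : dimq q mu nu != 0 ->
  [/\ (size mu <= size nu)%N,
      forall i, (i < size mu)%N -> nth 0 mu i <= nth 0 nu i &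
      forall i, (size nu - size mu <= i < size nu)%N ->
        nth 0 nu i <= nth 0 mu (i - (size nu - size mu))].
Proof.
move=> hnz.
have hle : (size mu <= size nu)%N.
  by rewrite leqNgt; apply: contra hnz => h; rewrite dimq_size_lt.
move: {2}(size nu - size mu)%N (erefl (size nu - size mu)%N) => k.
elim: k nu hnz hle => [|k IH] nu hnz hle hk.
  have sz : size nu = size mu by lia.
  have enu : nu = mu by apply/eqP; apply: contraNT hnz => ne; rewrite dimq_size_eq.
  by subst nu; split => // i hi; rewrite hk subn0.
have lt : (size mu < size nu)%N by lia.
have [nu' nin nz] : exists2 nu' : seq int, nu' \in predecessors nu & dimq q mu nu' != 0.
  apply/allPn; apply: contra hnz => /allP h; rewrite dimq_predecessors // big1_seq //.
  by move=> nu' /andP [_ /h /eqP ->]; rewrite mulr0.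
have [_ [sz hint]] := (mem_predecessors nu nu').1 nin.
have le_mu_nu' : (size mu <= size nu')%N by lia.
have [_ h1 h2] := IH nu' nz le_mu_nu' ltac:(lia).
split => // [i hi|i /andP [hi1 hi2]].
  by have [_ u] := hint i ltac:(lia); exact: le_trans (h1 i hi) u.
have [l _] := hint i.-1 ltac:(lia).
rewrite (@ltn_predK 0) in l; last by lia.
apply: le_trans l _.
have := h2 i.-1 ltac:(lia).
by have -> : (i.-1 - (size nu' - size mu) = i - (size nu - size mu))%N by lia.
Qed.

End Dimension.

(** * The path through the tails of a signature *)

(* [sgn_moment l] is the sum of the [i * l_i] over the positions [i] of [l],
   counted from [0]. *)
Fixpoint sgn_moment (l : seq int) : int :=
  match l with [::] => 0 | _ :: t => sgn_moment t + sgn_sum t end.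

Definition tail_exp (l : seq int) : int :=
  2 * sgn_moment l + (1 - (size l)%:Z) * sgn_sum l.

(* [interlace_exp s mu lam] is [2 * \sum_i (s + i + 1) * (mu_i - lam_(i+1))]
   when [size lam = (size mu).+1]. *)
Definition interlace_exp (s : nat) (mu lam : seq int) : int :=
  2 * (sgn_moment mu + sgn_sum mu - sgn_moment lam) +
  2 * s%:Z * (sgn_sum mu - sgn_sum (behead lam)).

Lemma interlace_exp_cons s y r a b t :
  interlace_exp s (y :: r) (a :: b :: t) =
  interlace_exp s.+1 r (b :: t) + 2 * s.+1%:Z * (y - b).
Proof. by rewrite /interlace_exp /= !sgn_sum_cons intS; ring. Qed.

Section TailWeight.
Variables (R : realType) (q : R).

(* The weight of the path through the tails of [l]:
   [*, [:: l_N], [:: l_(N-1); l_N], ..., l]. *)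
Fixpoint tail_weight (l : seq int) : R :=
  match l with [::] => 1 | a :: t => edge_w q t (a :: t) * tail_weight t end.

Fixpoint gap_series (s : nat) (l : seq int) : R :=
  match l with
  | a :: (b :: _) as t => (a - b)%:~R * q ^+ (2 * s.+1) + gap_series s.+1 t
  | _ => 0
  end.

Lemma gap_series_cons s a b t :
  gap_series s [:: a, b & t] = (a - b)%:~R * q ^+ (2 * s.+1) + gap_series s.+1 (b :: t).
Proof. by []. Qed.

Hypothesis q0 : 0 < q.

Let qU : q \is a GRing.unit.
Proof. by rewrite unitfE gt_eqF. Qed.

Lemma tail_weightE l : tail_weight l = q ^ tail_exp l.
Proof.
elim: l => [|a t IH] /=; first by rewrite /tail_exp sgn_sum_nil /= !mulr0 expr0z.
rewrite IH /edge_w -(exprzDr qU); congr (q ^ _).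
by rewrite /tail_exp /= !sgn_sum_cons intS; ring.
Qed.

Lemma tail_weight_gt0 l : 0 < tail_weight l.
Proof. by rewrite tail_weightE exprz_gt0. Qed.

Lemma edge_w_tail_weight mu lam : size lam = (size mu).+1 ->
  edge_w q mu lam * tail_weight mu = tail_weight lam * q ^ interlace_exp 0 mu lam.
Proof.
move=> sz; rewrite !tail_weightE /edge_w -!(exprzDr qU); congr (q ^ _).
by rewrite /tail_exp /interlace_exp sz intS mulr0 mul0r addr0; ring.
Qed.

Lemma tail_weight_le_dimq lam : signb lam -> tail_weight lam <= dimq q [::] lam.
Proof.
elim: lam => [|a t IH] sl; first by rewrite dimq_refl.
rewrite dimq_predecessors //.
rewrite (bigD1_seq t (behead_predecessors sl) (uniq_predecessors _)) /=.
rewrite -[leLHS]addr0 lerD //.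
  by rewrite ler_wpM2l ?(ltW (edge_w_gt0 _ _ q0)) // IH // (signb_behead sl).
by apply: sumr_ge0 => nu _; rewrite mulr_ge0 ?(ltW (edge_w_gt0 _ _ q0)) ?dimq_ge0.
Qed.

Hypothesis q1 : q <= 1.

Lemma sum_zrange_le s a b : b <= a ->
  \sum_(y <- zrange b a) q ^ (2 * s.+1%:Z * (y - b)) <=
  1 + (a - b)%:~R * q ^+ (2 * s.+1).
Proof.
move=> ba; rewrite /zrange big_map.
set n := absz (a - b).
have -> : a - b = n%:Z by rewrite /n gez0_abs // subr_ge0.
rewrite /= big_cons addr0 subrr mulr0 expr0z lerD //.
rewrite (iotaDl 1 0) big_map -(subn0 n) -/(index_iota 0 n) big_mkord subn0.
apply: (@le_trans _ _ (\sum_(i < n) q ^+ (2 * s.+1))); last first.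
  by rewrite sumr_const card_ord -mulr_natl.
apply: ler_sum => i _; rewrite addrC addKr -!PoszM.
by apply: ler_wiXn2l => //; [exact: ltW | rewrite leq_pmulr].
Qed.

Lemma sum_interlacings_le s lam : signb lam -> (0 < size lam)%N ->
  \sum_(mu <- interlacings lam) q ^ interlace_exp s mu lam <= expR (gap_series s lam).
Proof.
elim: lam s => // a [|b t] IH s sl _.
  rewrite /= big_seq1 (_ : interlace_exp s [::] [:: a] = 0) ?expr0z ?expR0 //.
  by rewrite /interlace_exp /= !sgn_sum_nil; ring.
have ba : b <= a by case/andP: sl.
change (interlacings (a :: b :: t))
  with [seq y :: r | y <- zrange b a, r <- interlacings (b :: t)].
rewrite big_allpairs_dep gap_series_cons expRD.
under eq_bigr => y _ do under eq_bigr => r _ do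
  rewrite interlace_exp_cons (exprzDr qU) mulrC.
under eq_bigr => y _ do rewrite -mulr_sumr.
rewrite -mulr_suml; apply: ler_pM.
- by apply: sumr_ge0 => r _; rewrite exprz_ge0 // ltW.
- by apply: sumr_ge0 => r _; rewrite exprz_ge0 // ltW.
- exact: le_trans (sum_zrange_le s ba) (expR_ge1Dx _).
- exact: IH (signb_behead sl) _.
Qed.

Lemma gap_series_le s lam : signb lam ->
  gap_series s lam <= (head 0 lam - last 0 lam)%:~R * q ^+ (2 * s.+1).
Proof.
elim: lam s => [|a [|b t] IH] s sl /=; rewrite ?subrr ?mul0r //.
have sbt := signb_behead sl.
have ba : b <= a by case/andP: sl.
apply: le_trans (lerD (lexx _) (IH s.+1 sbt)) _.
have -> : a - last b t = (a - b) + (b - last b t) by ring.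
rewrite (intrD _ (a - b)) mulrDl lerD // ler_wpM2l ?ler0z ?subr_ge0 //=;
  first exact: last_le_head.
by apply: ler_wiXn2l => //; [exact: ltW | rewrite leq_mul2l /= ltnW].
Qed.

Lemma gap_series_le_flat p s lam : signb lam -> (0 < p <= size lam)%N ->
  (forall i, (i.+1 < p)%N -> nth 0 lam i = nth 0 lam i.+1) ->
  gap_series s lam <= (head 0 lam - last 0 lam)%:~R * q ^+ (2 * (s + p)).
Proof.
elim: p s lam => // -[|p] IH s lam sl /andP[_ hp] heq.
  by rewrite addn1; exact: gap_series_le.
case: lam sl hp heq => [|a [|b t]] sl // hp heq.
have ab : a = b by have := heq 0%N isT.
rewrite gap_series_cons ab subrr mul0r add0r -addSnnS.
exact: IH (signb_behead sl) hp (fun i hi => heq i.+1 hi).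
Qed.

End TailWeight.

Lemma cyl_measurable lam a : fpaths_to lam a -> measurable (cyl a : set OmegaM).
Proof. by move=> h; apply: sub_sigma_algebra; exists lam, a. Qed.

Lemma bigcup_in_unpickle (I : countType) (T : Type) (S : set I) (F : I -> set T) :
  \bigcup_(i in S) F i =
  \bigcup_n (if unpickle n is Some i then (if `[< S i >] then F i else set0) else set0).
Proof.
apply/seteqP; split => [w [i Si Fi]|w [n _]].
  by exists (pickle i) => //; rewrite pickleK asboolT.
by case: (unpickle n) => // i; case: asboolP => // Si Fi; exists i.
Qed.

Lemma measurable_bigcup_in (d : measure_display) (T : sigmaRingType d)
    (I : countType) (S : set I) (F : I -> set T) :
  (forall i, S i -> measurable (F i)) -> measurable (\bigcup_(i in S) F i).
Proof.
move=> h; rewrite bigcup_in_unpickle; apply: bigcupT_measurable => n.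
by case: (unpickle n) => // i; case: asboolP => // Si; exact: h.
Qed.

Lemma negligible_bigcup_in (d : measure_display) (T : sigmaRingType d)
    (R : realFieldType) (mu : {measure set T -> \bar R})
    (I : countType) (S : set I) (F : I -> set T) :
  (forall i, S i -> mu.-negligible (F i)) -> mu.-negligible (\bigcup_(i in S) F i).
Proof.
move=> h; rewrite bigcup_in_unpickle; apply: negligible_bigcup => n.
case: (unpickle n) => [i|]; last exact: negligible_set0.
by case: asboolP => Si; [exact: h | exact: negligible_set0].
Qed.

Lemma le_measure_negligibleU (d : measure_display) (T : ringOfSetsType d)
    (R : realFieldType) (mu : {measure set T -> \bar R}) (A B Z : set T) :
  measurable A -> measurable B -> mu.-negligible Z -> A `<=` B `|` Z ->
  (mu A <= mu B)%E.
Proof.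
move=> mA mB [Z' [mZ' Z'0 ZZ']] sAB.
rewrite -(measureU0 mB mZ' Z'0) le_measure ?inE //; first exact: measurableU.
by move=> w /sAB [|/ZZ']; [left | right].
Qed.

Lemma level_setE lam : level_set (size lam) lam = \bigcup_(b in fpaths_to lam) cyl b.
Proof.
apply/seteqP; split => [w hw|w [b hb cw]].
  exists (mkseq (sval w) (size lam).+1).
    by rewrite -[X in fpaths_to X]hw; exact: fpaths_to_mkseq (svalP w).
  by move=> i; rewrite size_mkseq => hi; rewrite nth_mkseq.
by rewrite /level_set /= cw ?nth_fpaths_to // (size_fpaths_to hb).
Qed.

Lemma level_set_measurable lam : measurable (level_set (size lam) lam).
Proof.
by rewrite level_setE; apply: measurable_bigcup_in => b; exact: cyl_measurable.
Qed.

Definition eventually_eq (x : nat -> seq int) : set OmegaM :=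
  \bigcup_N \bigcap_i level_set (N + i) (x (N + i)%N).

Definition transp (T : eqType) (a b z : T) : T :=
  if z == a then b else if z == b then a else z.

Lemma transpK (T : eqType) (a b : T) : involutive (transp a b).
Proof.
move=> z; rewrite /transp; have [->|za] := eqVneq z a.
  by rewrite eqxx; have [->|] := eqVneq b a; rewrite ?eqxx.
by have [->|zb] := eqVneq z b; rewrite ?eqxx // (negbTE za) (negbTE zb).
Qed.

Lemma transp_bij (T : eqType) (A : set T) a b : A a -> A b -> set_bij A A (transp a b).
Proof.
move=> Aa Ab; have AA : set_fun A A (transp a b).
  by move=> z Az; rewrite /transp; case: ifP => // _; case: ifP.
split => // [z1 z2 _ _ e|z Az]; first by rewrite -(transpK a b z1) e transpK.
by exists (transp a b z); [exact: AA | rewrite transpK].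
Qed.

(** * The path along [lam_th theta] *)

Section LambdaTheta.
Variable theta : nat -> int.
Local Notation x := (lam_th theta).

Lemma size_lam_th n : size (x n) = n.
Proof. by rewrite /lam_th size_rev size_mkseq. Qed.

Lemma nth_lam_th n i : (i < n)%N -> nth 0 (x n) i = theta (n.-1 - i).
Proof.
move=> hi; rewrite /lam_th nth_rev size_mkseq // nth_mkseq; last by lia.
by congr theta; lia.
Qed.

Lemma lam_thS n : x n.+1 = theta n :: x n.
Proof. by rewrite /lam_th mkseqS rev_rcons. Qed.

Definition lam_th_seg (N M : nat) : seq (seq int) := mkseq (fun i => x (N + i.+1)) M.

Lemma lam_th_segS N M : lam_th_seg N M.+1 = rcons (lam_th_seg N M) (x (N + M.+1)).
Proof. exact: mkseqS. Qed.

Lemma last_lam_th_seg N M : last (x N) (lam_th_seg N M) = x (N + M).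
Proof. by case: M => [|M]; rewrite ?addn0 // lam_th_segS last_rcons. Qed.

Lemma mkseq_lam_th N : mkseq x N.+1 = x 0 :: lam_th_seg 0 N.
Proof. by rewrite /mkseq /= (iotaDl 1 0) -map_comp. Qed.

Lemma pw_lam_th_seg (R : realType) (q : R) N M : 0 < q ->
  pw q (x N) (lam_th_seg N M) = tail_weight q (x (N + M)) / tail_weight q (x N).
Proof.
move=> q0; elim: M => [|M IH].
  by rewrite addn0 divff // gt_eqF // tail_weight_gt0.
rewrite lam_th_segS pw_rcons IH last_lam_th_seg addnS lam_thS /=.
by rewrite mulrC mulrA.
Qed.

Lemma weight_mkseq_lam_th (R : realType) (q : R) N : 0 < q ->
  weight q (mkseq x N.+1) = tail_weight q (x N).
Proof. by move=> q0; rewrite mkseq_lam_th /= pw_lam_th_seg // divr1. Qed.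

Lemma weight_cat_lam_th_seg (R : realType) (q : R) N M b : 0 < q ->
  fpaths_to (x N) b ->
  weight q (b ++ lam_th_seg N M) =
  weight q b * (tail_weight q (x (N + M)) / tail_weight q (x N)).
Proof. by move=> q0 [s [-> _ ls]]; rewrite /= pw_cat ls pw_lam_th_seg. Qed.

Hypothesis theta_mono : {homo theta : i j / (i <= j)%N >-> i <= j}.

Lemma signb_lam_th n : signb (x n).
Proof.
apply/signbP => i; rewrite size_lam_th => hi.
by rewrite !nth_lam_th ?theta_mono //; lia.
Qed.

Lemma lam_th_predecessors n : x n \in predecessors (x n.+1).
Proof. by rewrite lam_thS behead_predecessors // -lam_thS signb_lam_th. Qed.

Lemma prec_lam_th n : prec (x n) (x n.+1).
Proof. exact/precP/lam_th_predecessors. Qed.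

Lemma lam_th_inf_path : is_inf_path x.
Proof. by split => // n; exact: prec_lam_th. Qed.

Lemma is_sign_lam_th n : is_sign n (x n).
Proof. by apply/is_signE; rewrite size_lam_th signb_lam_th. Qed.

Lemma is_fpath_lam_th_seg N M : is_fpath (x N) (lam_th_seg N M).
Proof.
elim: M => [|M IH] //; rewrite lam_th_segS is_fpath_rcons last_lam_th_seg addnS.
by split => //; exact: prec_lam_th.
Qed.

Lemma fpaths_to_cat_lam_th_seg N M b : fpaths_to (x N) b ->
  fpaths_to (x (N + M)) (b ++ lam_th_seg N M).
Proof.
move=> [s [-> fp ls]]; exists (s ++ lam_th_seg N M); split => //.
  by apply/is_fpath_cat; rewrite ls; split => //; exact: is_fpath_lam_th_seg.
by rewrite last_cat ls last_lam_th_seg.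
Qed.

Lemma level_set_lam_th_measurable k : measurable (level_set k (x k)).
Proof. by have := level_set_measurable (x k); rewrite size_lam_th. Qed.

Lemma eventually_eq_lam_th_measurable : measurable (eventually_eq x).
Proof.
apply: bigcupT_measurable => N; apply: bigcapT_measurable => i.
exact: level_set_lam_th_measurable.
Qed.

(* The group [S] can exchange any two paths from [*] to [x N], so the orbit
   of [x] contains every path that eventually agrees with [x]. *)
Lemma S_orbit_lam_th : S_orbit x = eventually_eq x.
Proof.
apply/seteqP; split => [w [N [s [hs ew]]]|w [N _ hw]].
  exists N.+1 => // i _; rewrite /level_set /= ew.
  suff : forall j, (N < j)%N -> foldr gact x s j = x j by apply; rewrite ltn_addr.
  elim: s hs {ew} => [|g s IH] //= [[/is_signE [sg _] _] hs] j hj.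
  rewrite {1}/gact sg; case: ifP => _; last exact: IH.
  by rewrite leqNgt hj; exact: IH.
have hwN i : (N <= i)%N -> sval w i = x i.
  by move=> hi; have := hw (i - N)%N I; rewrite /level_set /= subnKC.
set b := mkseq (sval w) N.+1.
have hb : fpaths_to (x N) b by rewrite -hwN //; exact: fpaths_to_mkseq (svalP w).
exists N, [:: Gen (x N) (transp (mkseq x N.+1) b)]; split.
  split => //; split; first exact: is_sign_lam_th.
  exact: transp_bij (fpaths_to_mkseq N lam_th_inf_path) hb.
rewrite /= /gact /= size_lam_th eqxx; apply: funext => i.
case: leqP => hi; first by rewrite /transp eqxx /b nth_mkseq.
by rewrite hwN // ltnW.
Qed.

Variable m : nat.
Hypothesis theta_const : forall i, (m <= i)%N -> theta i = theta m.
Local Notation c := (theta m).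

Lemma theta_le_const i : theta i <= c.
Proof. by rewrite -(theta_const (leq_maxr i m)) theta_mono ?leq_maxl. Qed.

(* The signatures of length [k] lying between [x k] and [(c, ..., c)]
   componentwise; the box is closed under taking predecessors. *)
Definition lam_th_box (k : nat) (lam : seq int) : Prop :=
  [/\ size lam = k, signb lam &
      forall i, (i < k)%N -> theta (k.-1 - i) <= nth 0 lam i /\ nth 0 lam i <= c].

Lemma lam_th_box_lam_th n : lam_th_box n (x n).
Proof.
split=> [|//|i hi]; rewrite ?size_lam_th ?signb_lam_th ?nth_lam_th //.
by rewrite theta_le_const.
Qed.

Lemma lam_th_box_predecessors k lam mu :
  lam_th_box k.+1 lam -> mu \in predecessors lam -> lam_th_box k mu.
Proof.
move=> [sl _ hl] /mem_predecessors [_ [sz hi]].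
have smu : size mu = k by move: sz; rewrite sl => -[].
split => //.
  apply/signbP => i hi'.
  have [h1 _] := hi i (ltnW hi'); have [_ h2] := hi i.+1 hi'.
  exact: le_trans h2 h1.
move=> i ik; rewrite -smu in ik; have [h1 h2] := hi i ik; rewrite smu in ik.
have [l1 _] := hl i.+1 ik; have [_ u1] := hl i (ltnW ik).
split; last exact: le_trans h2 u1.
by apply: le_trans h1; move: l1; congr (theta _ <= _); lia.
Qed.

Section Bounds.
Variables (R : realType) (q : R).
Hypotheses (q0 : 0 < q) (q1 : q < 1).
Local Notation B := (c - theta 0).

(* At level [k] the first [k - m] parts of a signature in the box equal [c],
   so its gap series only starts at depth [k - m]. *)
Lemma gap_series_box k lam : lam_th_box k lam -> (0 < k)%N ->
  gap_series q 0 lam <= B%:~R * q ^+ (k - m).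
Proof.
move=> [sl bl hl] k0.
set p := maxn 1 (k - m).
have hp : (0 < p <= size lam)%N by rewrite leq_max /= sl geq_max k0 leq_subr.
have flat i : (i.+1 < p)%N -> nth 0 lam i = nth 0 lam i.+1.
  move=> hi; have hi' : (i.+1 < k - m)%N by move: hi; rewrite /p; lia.
  have [l1 u1] := hl i ltac:(lia); have [l2 u2] := hl i.+1 ltac:(lia).
  rewrite theta_const in l1; last by lia.
  rewrite theta_const in l2; last by lia.
  by apply/eqP; rewrite eq_le (le_trans u1 l2) (le_trans u2 l1).
apply: le_trans (gap_series_le_flat q0 (ltW q1) 0 bl hp flat) _.
have hd0 : 0 <= head 0 lam - last 0 lam.
  case: lam sl bl {hl flat hp} => [|a t] // _ bl.
  by rewrite subr_ge0; exact: last_le_head.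
have hd : head 0 lam - last 0 lam <= B.
  rewrite lerB //; first by rewrite -nth0; have [_ ->] := hl 0%N k0.
  rewrite -nth_last sl; have [+ _] := hl k.-1 ltac:(lia).
  by rewrite subnn.
apply: ler_pM; rewrite ?ler0z ?ler_int //; first by rewrite exprn_ge0 // ltW.
by apply: ler_wiXn2l; [exact: ltW | exact: ltW | rewrite /p; lia].
Qed.

(* Relative to [tail_weight], the step down from [lam] at level [k] costs at
   most [expR (gap_series q 0 lam)]. *)
Lemma dimq_le_lam_th_box k lam : lam_th_box k lam ->
  dimq q [::] lam <= tail_weight q lam * expR (B%:~R * \sum_(j < k) q ^+ (j.+1 - m)).
Proof.
elim: k lam => [|k IH] lam hb.
  have [sl _ _] := hb; case: lam sl hb => // _ _.
  by rewrite dimq_refl big_ord0 mulr0 expR0 mulr1.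
have [sl bl _] := hb.
rewrite dimq_predecessors ?sl //.
apply: le_trans (_ : \sum_(nu <- predecessors lam) tail_weight q lam *
    q ^ interlace_exp 0 nu lam * expR (B%:~R * \sum_(j < k) q ^+ (j.+1 - m)) <= _).
  rewrite big_seq_cond [leRHS]big_seq_cond; apply: ler_sum => nu /andP[nin _].
  have [_ [sz _]] := (mem_predecessors lam nu).1 nin.
  rewrite -edge_w_tail_weight // -mulrA ler_wpM2l ?(ltW (edge_w_gt0 _ _ q0)) //.
  exact: IH (lam_th_box_predecessors hb nin).
rewrite -mulr_suml -mulr_sumr -mulrA ler_wpM2l ?(ltW (tail_weight_gt0 q0 _)) //.
rewrite big_ord_recr /= mulrDr expRD mulrC ler_wpM2l ?expR_ge0 //.
apply: le_trans (_ : expR (gap_series q 0 lam) <= _); last first.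
  by rewrite ler_expR; apply: gap_series_box.
rewrite /predecessors bl; apply: sum_interlacings_le; rewrite ?ltW ?sl //.
Qed.

Lemma sum_geom_le k : \sum_(j < k) q ^+ (j.+1 - m) <= (1 - q)^-1 / q ^+ m.
Proof.
have qm0 : 0 < q ^+ m by rewrite exprn_gt0.
have q10 : 0 < 1 - q by rewrite subr_gt0.
apply: le_trans (_ : \sum_(j < k) q ^+ j / q ^+ m <= _).
  apply: ler_sum => j _; rewrite ler_pdivlMr // -exprD.
  by apply: ler_wiXn2l; rewrite ?ltW //; lia.
rewrite -mulr_suml ler_pM2r ?invr_gt0 // -[leRHS]div1r ler_pdivlMr //.
rewrite mulrC -opprB mulNr -subrX1 opprB lerBlDr lerDl exprn_ge0 //.
exact: ltW.
Qed.

Lemma dimq_lam_th_le n : dimq q [::] (x n) <=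
  tail_weight q (x n) * expR (B%:~R * ((1 - q)^-1 / q ^+ m)).
Proof.
apply: le_trans (dimq_le_lam_th_box (lam_th_box_lam_th n)) _.
rewrite ler_wpM2l ?(ltW (tail_weight_gt0 q0 _)) // ler_expR ler_wpM2l ?sum_geom_le //.
by rewrite ler0z subr_ge0 theta_le_const.
Qed.

End Bounds.

Section Forced.
Variables (R : realType) (q : R).
Hypothesis q0 : 0 < q.

(* Beyond level [m], the only predecessor of [x n.+1] reachable from [x N]
   is [x n]: its first parts are squeezed to [c] and its last ones to [x N]. *)
Lemma lam_th_forced N n (nu : seq int) : (m <= N <= n)%N ->
  nu \in predecessors (x n.+1) -> dimq q (x N) nu != 0 -> nu = x n.
Proof.
move=> /andP[mN Nn] nin nz.
have [_ [sz hint]] := (mem_predecessors _ nu).1 nin.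
have szn : size nu = n by move: sz; rewrite size_lam_th => -[].
have [_ _ h2] := dimq_neq0_bounds nz; rewrite size_lam_th szn in h2.
apply: (@eq_from_nth _ 0); rewrite ?szn ?size_lam_th // => i hi.
rewrite nth_lam_th //; apply/eqP; rewrite eq_le; apply/andP; split.
  have [iN | iN] := leqP (n - N) i.
    apply: le_trans (h2 i ltac:(lia)) _.
    by rewrite nth_lam_th ?theta_mono //; lia.
  have [_ u] := hint i ltac:(lia); apply: le_trans u _.
  by rewrite nth_lam_th ?theta_const ?theta_le_const //; lia.
have [l _] := hint i ltac:(lia); apply: le_trans l.
by rewrite nth_lam_th ?theta_mono //; lia.
Qed.

Lemma dimq_lam_th N k : (m <= N)%N ->
  dimq q (x N) (x (N + k)) = tail_weight q (x (N + k)) / tail_weight q (x N).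
Proof.
move=> mN; elim: k => [|k IH].
  by rewrite addn0 dimq_refl divff // gt_eqF // tail_weight_gt0.
rewrite addnS dimq_predecessors; last by rewrite !size_lam_th; lia.
rewrite (bigD1_seq _ (lam_th_predecessors _) (uniq_predecessors _)) /=.
rewrite big1_seq ?addr0 => [|nu /andP [ne nin]].
  by rewrite IH lam_thS /= mulrA -lam_thS.
apply/eqP; rewrite mulf_eq0; apply/orP; right; apply: contraNT ne => nz.
by apply/eqP; apply: lam_th_forced nin nz; rewrite mN leq_addr.
Qed.

End Forced.

End LambdaTheta.

(** * The measure [P^theta] *)

Lemma nondecreasing_bounded_eventually_const (u : nat -> int) (M : int) :
  {homo u : i j / (i <= j)%N >-> i <= j} -> (forall i, u i <= M) ->
  exists m, forall i, (m <= i)%N -> u i = u m.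
Proof.
move=> nd uM.
suff gap_le n i : (absz (M - u i) <= n)%N ->
    exists m, forall j, (m <= j)%N -> u j = u m.
  exact: (gap_le _ 0%N (leqnn _)).
elim: n i => [|n IH] i hi.
  exists i => j ij; apply/eqP; rewrite eq_le (nd _ _ ij) andbT.
  by have := uM j; move: hi; lia.
have [[j [ij lt]]|/forallNP hmax] := pselect (exists j, (i <= j)%N /\ u i < u j).
  by apply: (IH j); have := uM j; have := uM i; move: hi lt; lia.
exists i => j ij; apply/eqP; rewrite eq_le (nd _ _ ij) andbT leNgt.
by apply/negP => lt; apply: (hmax j).
Qed.

Section Measure.
Variables (R : realType) (q : R) (theta : nat -> int) (m : nat).
Variable P : probability OmegaM R.
Hypotheses (q0 : 0 < q) (q1 : q < 1).
Hypothesis theta_mono : {homo theta : i j / (i <= j)%N >-> i <= j}.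
Hypothesis theta_const : forall i, (m <= i)%N -> theta i = theta m.
Hypothesis P_theta : is_P_theta q theta P.

Local Notation x := (lam_th theta).
Local Notation A n := (tail_weight q (x n)).
Local Notation D n := (dimq q [::] (x n)).
Local Notation xpath N := (mkseq x N.+1).

Let xpath_fpath N : fpaths_to (x N) (xpath N).
Proof. exact: fpaths_to_mkseq (lam_th_inf_path theta_mono). Qed.

Let P_fine S : measurable S -> P S = (fine (P S))%:E.
Proof. by move=> mS; rewrite fineK // fin_num_measure. Qed.

Lemma dimq_lam_th_gt0 n : 0 < D n.
Proof.
apply: lt_le_trans (tail_weight_gt0 q0 _) (tail_weight_le_dimq q0 _).
exact: signb_lam_th.
Qed.

Lemma tail_dim_ratio_cvg N : (m <= N)%N ->
  A n / D n @[n --> \oo] --> fine (P (cyl (xpath N))).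
Proof.
move=> mN.
have h := P_theta.2 N (x N) _ (is_sign_lam_th theta_mono N) (xpath_fpath N).
rewrite weight_mkseq_lam_th // in h.
have {}h : (fun n => dimq q (x N) (x n) / D n * A N) @ \oo -->
    fine (P (cyl (xpath N))) / A N * A N by apply: cvgM h (cvg_cst _).
rewrite divfK ?gt_eqF ?tail_weight_gt0 // in h.
apply: (cvg_trans _ h); apply: near_eq_cvg.
near=> n; have Nn : (N <= n)%N by near: n; exists N.
rewrite /= -(subnKC Nn) (dimq_lam_th theta_mono theta_const q0 _ mN).
by rewrite mulrAC divfK // gt_eqF // tail_weight_gt0.
Unshelve. all: end_near.
Qed.

Let L := fine (P (cyl (xpath m))).

Lemma prob_cyl_lam_th N : (m <= N)%N -> fine (P (cyl (xpath N))) = L.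
Proof.
move=> mN; rewrite -(cvg_lim _ (tail_dim_ratio_cvg mN)) //.
by rewrite (cvg_lim _ (tail_dim_ratio_cvg (leqnn m))).
Qed.

Lemma prob_cyl_lam_th_gt0 : 0 < L.
Proof.
set C := expR ((theta m - theta 0)%:~R * ((1 - q)^-1 / q ^+ m)).
apply: lt_le_trans (_ : 0 < C^-1) _; first by rewrite invr_gt0 expR_gt0.
have hr := tail_dim_ratio_cvg (leqnn m).
rewrite /L -(cvg_lim _ hr) //; apply: limr_ge; first exact: cvgP hr.
near=> n; rewrite ler_pdivlMr ?dimq_lam_th_gt0 // ler_pdivrMl ?expR_gt0 // mulrC.
exact: dimq_lam_th_le.
Unshelve. all: end_near.
Qed.

Lemma prob_cyl N b : (m <= N)%N -> fpaths_to (x N) b ->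
  fine (P (cyl b)) = weight q b * (L / A N).
Proof.
move=> mN hb.
have := P_theta.1 N (x N) b (is_sign_lam_th theta_mono N) hb.
rewrite -(P_theta.1 N (x N) _ (is_sign_lam_th theta_mono N) (xpath_fpath N)).
rewrite weight_mkseq_lam_th // prob_cyl_lam_th // => e.
by rewrite -e mulrC divfK // gt_eqF // weight_gt0.
Qed.

Lemma prob_level_set N : (m <= N)%N ->
  fine (P (level_set N (x N))) = L * (D N / A N).
Proof.
move=> mN.
have := P_theta.1 N (x N) _ (is_sign_lam_th theta_mono N) (xpath_fpath N).
rewrite weight_mkseq_lam_th // prob_cyl_lam_th // => /(congr1 ( *%R^~ (D N))).
by rewrite divfK ?gt_eqF ?dimq_lam_th_gt0 // => <-; rewrite mulrAC mulrA.
Qed.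

Lemma prob_level_set_cvg : fine (P (level_set N (x N))) @[N --> \oo] --> (1 : R).
Proof.
have h : (fun N => L * (A N / D N)^-1) @ \oo --> L * L^-1.
  apply: cvgM (cvg_cst _) (cvgV _ (tail_dim_ratio_cvg (leqnn m))).
  exact: lt0r_neq0 prob_cyl_lam_th_gt0.
rewrite divff ?gt_eqF ?prob_cyl_lam_th_gt0 // in h.
apply: (cvg_trans _ h); apply: near_eq_cvg.
near=> N; rewrite /= invf_div prob_level_set //.
by near: N; exists m.
Unshelve. all: end_near.
Qed.

Lemma prob_lam_th : P [set w : OmegaM | sval w = x] = L%:E.
Proof.
pose F M : set OmegaM := cyl (xpath (m + M)).
have mF M : measurable (F M) by exact: cyl_measurable (xpath_fpath _).
have -> : [set w : OmegaM | sval w = x] = \bigcap_M F M.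
  apply/seteqP; split => [w /= ew M _ i|w hw].
    by rewrite size_mkseq => hi; rewrite nth_mkseq // ew.
  apply: funext => i.
  have hi : (i < size (xpath (m + i)))%N by rewrite size_mkseq ltnS leq_addl.
  by rewrite (hw i I i hi) nth_mkseq //; rewrite size_mkseq in hi.
have F_nonincr : nonincreasing_seq F.
  move=> M M' MM'; apply/subsetPset => w hw i; rewrite size_mkseq => hi.
  by rewrite nth_mkseq // hw ?nth_mkseq ?size_mkseq //; lia.
have PF0 : (P (F 0%N) < +oo)%E.
  by rewrite (le_lt_trans (probability_le1 P (mF 0%N))) ?ltry.
have := nonincreasing_cvg_mu PF0 mF (bigcapT_measurable mF) F_nonincr.
have -> : P \o F = cst L%:E.
  by apply: funext => M; rewrite /= P_fine // prob_cyl_lam_th // leq_addr.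
by move=> h; rewrite -(cvg_lim _ h) ?lim_cst.
Qed.

Lemma null_cyl_extension N M b : (m <= N)%N -> fpaths_to (x N) b ->
  P (cyl b `\` cyl (b ++ lam_th_seg theta N M)) = 0%E.
Proof.
move=> mN hb; have hb' := fpaths_to_cat_lam_th_seg theta_mono M hb.
have [mb mb'] := (cyl_measurable hb, cyl_measurable hb').
rewrite measureD //; last by rewrite (le_lt_trans (probability_le1 P mb)) ?ltry.
rewrite setIidr => [|w hw i hi]; last first.
  by rewrite hw ?nth_cat ?hi // size_cat ltn_addr.
rewrite [X in (X - _)%E](P_fine mb) [X in (_ - X)%E](P_fine mb').
rewrite (prob_cyl mN hb) (prob_cyl (leq_trans mN (leq_addr M N)) hb').
rewrite weight_cat_lam_th_seg // -EFinB; congr EFin.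
by field; rewrite !gt_eqF ?tail_weight_gt0.
Qed.

(* A path through [x N] that leaves [x] at level [N + M] lies in some [cyl b]
   minus its extension along [x], and these differences are null. *)
Lemma prob_level_set_le N : (m <= N)%N ->
  fine (P (level_set N (x N))) <= fine (P (eventually_eq x)).
Proof.
move=> mN.
pose Z := \bigcup_M \bigcup_(b in fpaths_to (x N))
  (cyl b `\` cyl (b ++ lam_th_seg theta N M)).
have nZ : P.-negligible Z.
  apply: negligible_bigcup => M; apply: negligible_bigcup_in => b hb.
  apply/negligibleP; last exact: null_cyl_extension.
  apply: measurableD (cyl_measurable hb) (cyl_measurable _).
  exact: fpaths_to_cat_lam_th_seg.
have mE := eventually_eq_lam_th_measurable theta.
have mLN := level_set_lam_th_measurable theta N.
rewrite -lee_fin -(P_fine mE) -(P_fine mLN).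
apply: le_measure_negligibleU mLN mE nZ _ => w hw.
have [h|/existsNP [[|i] hi]] := pselect (forall i, sval w (N + i)%N = x (N + i)%N).
- by left; exists N => // i _; exact: h.
- by case: hi; rewrite addn0.
right; exists i.+1 => //; exists (mkseq (sval w) N.+1).
  by rewrite -[X in fpaths_to X]hw; exact: fpaths_to_mkseq (svalP w).
split => [j|hc]; first by rewrite size_mkseq => hj; rewrite nth_mkseq.
apply: hi; rewrite hc; last by rewrite size_cat !size_mkseq; lia.
rewrite nth_cat size_mkseq ltnNge (_ : (N.+1 <= N + i.+1)%N) ?addnS ?ltnS ?leq_addr //=.
by rewrite nth_mkseq; [congr x; lia | lia].
Qed.

Lemma prob_S_orbit_lam_th : P (S_orbit x) = 1%E.
Proof.
have mE := eventually_eq_lam_th_measurable theta.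
rewrite S_orbit_lam_th //; apply/eqP.
rewrite eq_le probability_le1 //= P_fine // lee_fin -(cvg_lim _ prob_level_set_cvg) //.
apply: limr_le; first exact: cvgP prob_level_set_cvg.
by near=> N; apply: prob_level_set_le; near: N; exists m.
Unshelve. all: end_near.
Qed.

End Measure.

Theorem lemma4p2 (R : realType) (q : R) (theta : nat -> int)
  (P : probability OmegaM R) :
  0 < q < 1 ->
  (forall i, theta i <= theta i.+1) ->
  (exists M : int, forall i, `|theta i| <= M) ->
  is_P_theta q theta P ->
  (0 < P [set w : OmegaM | sval w = lam_th theta])%E /\
  P (S_orbit (lam_th theta)) = 1%E.
Proof.
move=> /andP[q0 q1] theta_step [M hM] P_theta.
have theta_mono : {homo theta : i j / (i <= j)%N >-> i <= j}.
  exact: homo_leq le_trans theta_step.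
have [m theta_const] := nondecreasing_bounded_eventually_const theta_mono
  (fun i => le_trans (ler_norm _) (hM i)).
split; last exact: prob_S_orbit_lam_th theta_mono theta_const P_theta.
rewrite (prob_lam_th q0 q1 theta_mono theta_const P_theta) lte_fin.
exact: prob_cyl_lam_th_gt0 q0 q1 theta_mono theta_const P_theta.
Qed.
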